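(* Let $f_1,\dots,f_n,g\in\mathbb K[x,\bar y_0,\bar y]$ and $\bar r_0=(r_{01},\dots,r_{0n})\in\mathbb K^n$ with $g(0,\bar r_0,\bar r_0)\neq 0$. Let $w$ be a new variable and let $h(x,\bar y_0,\bar y,w)$ be the polynomial obtained from the syntactic stream derivative $g'=g'(x,\bar y_0,\bar y,\bar y')$ by replacing each variable $y_i'$ with the polynomial $f_i(x,\bar y_0,\bar y)\cdot w$, $i=1,\dots,n$. Let $\bar\sigma=(\sigma_1,\dots,\sigma_n)\in\Sigma^n$ satisfy $$\sigma_i'=f_i(X,\bar r_0,\bar\sigma)\times g(X,\bar r_0,\bar\sigma)^{-1},\qquad \sigma_i(0)=r_{0i}\qquad(i=1,\dots,n).$$ Then, with $\tau:=g(X,\bar r_0,\bar\sigma)^{-1}$, the tuple $(\bar\sigma,\tau)$ is the unique solution of the polynomial initial value problem $$\sigma_i'=f_i(X,\bar r_0,\bar\sigma)\times\tau,\ \ \sigma_i(0)=r_{0i}\ (i=1,\dots,n);\qquad \tau'=-g(0,\bar r_0,\bar r_0)^{-1}\, h(X,\bar r_0,\bar\sigma,\tau)\times\tau,\ \ \tau(0)=g(0,\bar r_0,\bar r_0)^{-1}.$$ Conversely, for any $(\bar\sigma,\tau)\in\Sigma^{n+1}$ satisfying this polynomial initial value problem, $\bar\sigma$ satisfies the rational system displayed above.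
   Context: Streams $\Sigma=\mathbb K^\omega$ over a field $\mathbb K$ of characteristic $0$, with pointwise sum, convolution $(\sigma\times\tau)(i)=\sum_{j=0}^{i}\sigma(j)\tau(i-j)$, scalars $r$ identified with $(r,0,0,\dots)$, $X=(0,1,0,\dots)$, stream derivative $\sigma'(i)=\sigma(i+1)$. A stream $\sigma$ with $\sigma(0)\ne0$ has a unique convolution inverse $\sigma^{-1}$. Evaluation $q(X,\bar r_0,\bar\sigma,\dots)$ of a polynomial substitutes $x\mapsto X$, $y_{0i}\mapsto r_{0i}$ (constant stream), $y_i\mapsto\sigma_i$, $w\mapsto\tau$. The syntactic stream derivative: with $y_0:=x$, $y_{00}:=0$, total order $y_0<y_1<\dots<y_n$, and $\min(m)$ the least variable of a monomial $m\neq1$, define on monomials by induction on total degree $(1)'=0$, $(x)'=1$, $(y_i)'=y_i'$ ($1\le i\le n$), $(y_i m)'=y_i' m+y_{0i}(m)'$ when $m\ne1$ and $y_i=\min(y_im)$, and extend linearly; for $g\in\mathbb K[x,\bar y_0,\bar y]$ the $y_{0i}$ appearing in $g$ are treated as coefficients (constants), so $g'\in\mathbb K[x,\bar y_0,\bar y,\bar y']$. A solution of a polynomial stream differential equation system $y_i'=p_i$, $y_i(0)=r_i$ is a tuple of streams with $\sigma_i'=p_i(X,\bar\sigma)$ and $\sigma_i(0)=r_i$. *)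

From HB Require Import structures.
From mathcomp Require Import all_boot all_order all_algebra.
From mathcomp Require Import mpoly.
Set Implicit Arguments. Unset Strict Implicit. Unset Printing Implicit Defensive.
Import GRing.Theory.
Local Open Scope ring_scope.

Section Streams.
Variable K : fieldType.

Definition stream := nat -> K.

Definition sadd (s t : stream) : stream := fun i => s i + t i.
Definition smul (s t : stream) : stream :=
  fun i => \sum_(j < i.+1) s j * t (i - j)%N.
Definition sconst (r : K) : stream := fun i => if i is 0%N then r else 0.
Definition szero : stream := sconst 0.
Definition sone : stream := sconst 1.
(* scaling by a scalar = convolution with the constant stream *)
Definition sscale (r : K) (s : stream) : stream := fun i => r * s i.
Definition sX : stream := fun i => if i == 1%N then 1 else 0.
Definition sder (s : stream) : stream := fun i => s i.+1.
Definition spow (s : stream) (k : nat) : stream := iter k (smul s) sone.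

(* convolution inverse: tau(0) = s(0)^-1,
   tau(m+1) = - s(0)^-1 * sum_{j=1}^{m+1} s(j) tau(m+1-j);
   this is the unique convolution inverse when s(0) != 0. *)
Fixpoint sinv_aux (s : stream) (m : nat) : seq K :=
  match m with
  | 0%N => [:: (s 0%N)^-1]
  | m'.+1 => let t := sinv_aux s m' in
      rcons t (- (s 0%N)^-1 * \sum_(j < m'.+1) s j.+1 * nth 0 t (m' - j)%N)
  end.
Definition sinv (s : stream) : stream := fun i => nth 0 (sinv_aux s i) i.

Definition seval (k : nat) (p : {mpoly K[k]}) (v : 'I_k -> stream) : stream :=
  \big[sadd/szero]_(m <- msupp p)
     sscale (p@_m) (\big[smul/sone]_(j < k) spow (v j) (m j)).

End Streams.

Section Vars.
Variable n : nat.
(* Ring A = K[x, y01..y0n, y1..yn] : variables indexed by 'I_(n+n).+1 *)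
Definition vxA : 'I_(n+n).+1 := inord 0.
Definition vy0A (i : 'I_n) : 'I_(n+n).+1 := inord i.+1.
Definition vyA (i : 'I_n) : 'I_(n+n).+1 := inord (n + i).+1.
(* Ring B = K[x, y0, y, y'] : variables indexed by 'I_(n+n+n).+1 *)
Definition vxB : 'I_(n+n+n).+1 := inord 0.
Definition vy0B (i : 'I_n) : 'I_(n+n+n).+1 := inord i.+1.
Definition vyB (i : 'I_n) : 'I_(n+n+n).+1 := inord (n + i).+1.
Definition vypB (i : 'I_n) : 'I_(n+n+n).+1 := inord (n + n + i).+1.
(* Ring C = K[x, y0, y, w] : variables indexed by 'I_(n+n).+2 *)
Definition vxC : 'I_(n+n).+2 := inord 0.
Definition vy0C (i : 'I_n) : 'I_(n+n).+2 := inord i.+1.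
Definition vyC (i : 'I_n) : 'I_(n+n).+2 := inord (n + i).+1.
Definition vwC : 'I_(n+n).+2 := inord (n + n).+1.
End Vars.

(* apply F to the ordinal k : 'I_n (default d if k >= n, never used) *)
Definition atI (T : Type) (n k : nat) (F : 'I_n -> T) (d : T) : T :=
  if @insub nat (fun k => (k < n)%N) 'I_n k is Some i then F i else d.

Section SyntacticDerivative.
Variables (K : fieldType) (n : nat).
Local Notation A := {mpoly K[(n+n).+1]}.
Local Notation B := {mpoly K[(n+n+n).+1]}.
Local Notation C := {mpoly K[(n+n).+2]}.

(* the variables y_0 := x (None), y_1..y_n (Some i), in the total order
   y_0 < y_1 < ... < y_n *)
Definition varB (z : option 'I_n) : B :=
  if z is Some i then 'X_(vyB i) else 'X_(vxB n).
Definition dvarB (z : option 'I_n) : B :=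
  if z is Some i then 'X_(vypB i) else 1.
Definition cvarB (z : option 'I_n) : B :=
  if z is Some i then 'X_(vy0B i) else 0.

(* a monomial in x, y_1..y_n written as a word sorted by the variable order;
   the head of the word is min(m).  (z m)' = z' m + y_{0z} (m)', (1)' = 0 *)
Fixpoint dword (w : seq (option 'I_n)) : B :=
  match w with
  | [::] => 0
  | z :: w' => dvarB z * \prod_(u <- w') varB u + cvarB z * dword w'
  end.

Definition word_of (m : 'X_{1..(n+n).+1}) : seq (option 'I_n) :=
  nseq (m (vxA n)) None ++ flatten [seq nseq (m (vyA i)) (Some i) | i <- enum 'I_n].

(* the y_{0i}-part of a monomial, treated as a coefficient *)
Definition y0part (m : 'X_{1..(n+n).+1}) : B :=
  \prod_(i < n) 'X_(vy0B i) ^+ m (vy0A i).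

Definition synder (g : A) : B :=
  \sum_(m <- msupp g) g@_m *: (y0part m * dword (word_of m)).

Definition embAC (p : A) : C :=
  p \mPo [tuple 'X_(widen_ord (leqnSn _) j) | j < (n+n).+1].

(* h(x,y0,y,w) := g'[y_i' := f_i * w] *)
Definition hpoly (f : 'I_n -> A) (g : A) : C :=
  synder g \mPo [tuple
    (if (j < (n+n).+1)%N then 'X_(inord j)
     else atI (j - (n+n).+1) (fun i => embAC (f i)) 0 * 'X_(vwC n)) | j < (n+n+n).+1].
End SyntacticDerivative.

Section Systems.
Variables (K : fieldType) (n : nat).
Local Notation A := {mpoly K[(n+n).+1]}.

(* point (x, y0, y) := (X, r0, sigma) in streams *)
Definition ptA (r0 : 'I_n -> K) (sigma : 'I_n -> stream K) :
    'I_(n+n).+1 -> stream K :=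
  fun j => if (j == 0%N :> nat) then sX K
           else if (j <= n)%N then sconst (atI j.-1 r0 0)
           else atI (j - n).-1 sigma (szero K).
(* point (x, y0, y, w) := (X, r0, sigma, tau) *)
Definition ptC (r0 : 'I_n -> K) (sigma : 'I_n -> stream K) (tau : stream K) :
    'I_(n+n).+2 -> stream K :=
  fun j => if (j == 0%N :> nat) then sX K
           else if (j <= n)%N then sconst (atI j.-1 r0 0)
           else if (j <= n + n)%N then atI (j - n).-1 sigma (szero K)
           else tau.
(* point (x, y0, y) := (0, r0, r0) in K *)
Definition pt0 (r0 : 'I_n -> K) : 'I_(n+n).+1 -> K :=
  fun j => if (j == 0%N :> nat) then 0
           else if (j <= n)%N then atI j.-1 r0 0
           else atI (j - n).-1 r0 0.

Definition rat_sol (f : 'I_n -> A) (g : A) (r0 : 'I_n -> K)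
    (sigma : 'I_n -> stream K) : Prop :=
  forall i : 'I_n,
    sder (sigma i) =1 smul (seval (f i) (ptA r0 sigma))
                           (sinv (seval g (ptA r0 sigma)))
    /\ sigma i 0%N = r0 i.

Definition poly_sol (f : 'I_n -> A) (g : A) (r0 : 'I_n -> K)
    (sigma : 'I_n -> stream K) (tau : stream K) : Prop :=
  (forall i : 'I_n,
     sder (sigma i) =1 smul (seval (f i) (ptA r0 sigma)) tau
     /\ sigma i 0%N = r0 i)
  /\ sder tau =1 sscale (- (g.@[pt0 r0])^-1)
                        (smul (seval (hpoly f g) (ptC r0 sigma tau)) tau)
  /\ tau 0%N = (g.@[pt0 r0])^-1.
End Systems.

From HB Require Import structures.
From mathcomp Require Import all_boot all_order all_algebra.
From mathcomp Require Import mpoly.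
From mathcomp Require Import boolp.
From mathcomp Require Import zify.
Set Implicit Arguments. Unset Strict Implicit. Unset Printing Implicit Defensive.
Import GRing.Theory.
Local Open Scope ring_scope.

(* Streams with pointwise sum and convolution form a commutative ring in which
   the constant embedding and the initial value are ring morphisms, and the
   stream derivative obeys the product rule (s t)' = s' t + s(0) t'.
   Together, the equation for tau in the polynomial system says exactly that
   tau = G^-1, which gives both directions and the uniqueness. *)

Section StreamRing.
Variable K : fieldType.

(* The streams over [K], as a type that will carry the ring structure of
   pointwise sum and convolution product. *)
Definition sring : Type := nat -> K.
HB.instance Definition _ := gen_eqMixin sring.
HB.instance Definition _ := gen_choiceMixin sring.

Definition sopp (s : sring) : sring := fun i => - s i.

Lemma saddA : associative (@sadd K : sring -> sring -> sring).
Proof. by move=> s t u; apply: funext => i; rewrite /sadd addrA. Qed.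

Lemma saddC : commutative (@sadd K : sring -> sring -> sring).
Proof. by move=> s t; apply: funext => i; rewrite /sadd addrC. Qed.

Lemma add0s : left_id (szero K : sring) (@sadd K).
Proof. by move=> s; apply: funext => -[|i]; rewrite /sadd /szero /sconst add0r. Qed.

Lemma addNs : left_inverse (szero K : sring) sopp (@sadd K).
Proof. by move=> s; apply: funext => -[|i]; rewrite /sadd /szero /sopp /sconst addNr. Qed.

HB.instance Definition _ := GRing.isZmodule.Build sring saddA saddC add0s addNs.

(* The first [N] coefficients of a stream as a polynomial: the coefficients of
   a convolution below [N] are those of the product of truncations, which
   transfers associativity and commutativity from polynomials. *)
Definition trunc (N : nat) (s : stream K) : {poly K} := \poly_(j < N) s j.

Lemma smul_trunc N s t i : (i < N)%N -> smul s t i = (trunc N s * trunc N t)`_i.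
Proof.
move=> iN; rewrite coefM; apply: eq_bigr => j _; rewrite /trunc !coef_poly.
have jN : (j < N)%N by apply: leq_ltn_trans iN; rewrite -ltnS.
have ijN : (i - j < N)%N by apply: leq_ltn_trans iN; rewrite leq_subr.
by rewrite jN ijN.
Qed.

Lemma coefM_agree (p p' q q' : {poly K}) i :
  (forall j, (j <= i)%N -> p`_j = p'`_j) ->
  (forall j, (j <= i)%N -> q`_j = q'`_j) ->
  (p * q)`_i = (p' * q')`_i.
Proof.
move=> Hp Hq; rewrite !coefM; apply: eq_bigr => -[j /= ji] _.
by rewrite Hp // Hq // leq_subr.
Qed.

Lemma coef_trunc_smul N s t j :
  (j < N)%N -> (trunc N (smul s t))`_j = (trunc N s * trunc N t)`_j.
Proof. by move=> jN; rewrite {1}/trunc coef_poly jN (smul_trunc s t jN). Qed.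

Lemma smulA : associative (@smul K : sring -> sring -> sring).
Proof.
move=> s t u; apply: funext => i; have iN := ltnSn i.
rewrite (smul_trunc s _ iN) (smul_trunc _ u iN).
transitivity ((trunc i.+1 s * trunc i.+1 t * trunc i.+1 u)`_i).
  by rewrite -mulrA; apply: coefM_agree => // j ji; rewrite coef_trunc_smul.
by apply: coefM_agree => // j ji; rewrite coef_trunc_smul.
Qed.

Lemma smulC : commutative (@smul K : sring -> sring -> sring).
Proof.
by move=> s t; apply: funext => i; rewrite !(smul_trunc _ _ (ltnSn i)) mulrC.
Qed.

Lemma mul1s : left_id (sone K : sring) (@smul K).
Proof.
move=> s; apply: funext => i; rewrite /smul big_ord_recl /sone /sconst /=.
by rewrite mul1r subn0 big1 ?addr0 // => j _; rewrite mul0r.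
Qed.

Lemma smulDl : left_distributive (@smul K : sring -> sring -> sring) (@sadd K).
Proof.
move=> s t u; apply: funext => i; rewrite /smul /sadd -big_split /=.
by apply: eq_bigr => j _; rewrite mulrDl.
Qed.

Lemma sone_neq0 : (sone K : sring) != (szero K : sring).
Proof. by apply/eqP => /(congr1 (fun s : sring => s 0%N)) /eqP; rewrite oner_eq0. Qed.

HB.instance Definition _ :=
  GRing.Zmodule_isComNzRing.Build sring smulA smulC mul1s smulDl sone_neq0.

End StreamRing.

Section StreamCalculus.
Variable K : fieldType.
Local Notation sring := (sring K).

Definition sc (c : K) : sring := sconst c.
Definition ev0 (s : sring) : K := s 0%N.

Lemma mul_sc (c : K) (s : sring) i : (sc c * s) i = c * s i.
Proof.
rewrite /GRing.mul /= /smul big_ord_recl /= subn0 big1 ?addr0 // => j _.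
by rewrite /sc /sconst /= mul0r.
Qed.

Lemma sc_is_zmod_morphism : zmod_morphism sc.
Proof.
move=> a b; apply: funext => i; rewrite /sc /sconst /GRing.add /= /sadd /sopp.
by case: i => [|i] //; rewrite subr0.
Qed.
HB.instance Definition _ := GRing.isZmodMorphism.Build K sring sc sc_is_zmod_morphism.

Lemma sc_is_monoid_morphism : monoid_morphism sc.
Proof.
split=> [//|a b]; apply: funext => i.
by rewrite mul_sc /sc /sconst; case: i => // i; rewrite mulr0.
Qed.
HB.instance Definition _ := GRing.isMonoidMorphism.Build K sring sc sc_is_monoid_morphism.

Lemma ev0_is_zmod_morphism : zmod_morphism ev0. Proof. by []. Qed.
HB.instance Definition _ := GRing.isZmodMorphism.Build sring K ev0 ev0_is_zmod_morphism.

Lemma ev0_is_monoid_morphism : monoid_morphism ev0.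
Proof. by split=> [//|s t]; rewrite /ev0 /GRing.mul /= /smul big_ord1. Qed.
HB.instance Definition _ := GRing.isMonoidMorphism.Build sring K ev0 ev0_is_monoid_morphism.

Lemma sscale_sc (c : K) (s : stream K) : sscale c s = sc c * (s : sring).
Proof. by apply: funext => i; rewrite mul_sc. Qed.

Lemma seval_mmap k (p : {mpoly K[k]}) (v : 'I_k -> stream K) :
  seval p v = mmap sc (v : 'I_k -> sring) p.
Proof.
rewrite /seval /mmap; apply: eq_bigr => m _; rewrite sscale_sc.
have -> : \big[@smul K/sone K]_(j < k) spow (v j) (m j) = mmap1 (v : 'I_k -> sring) m.
  by apply: eq_bigr => j _; exact: (iter_mulr_1 (m j) (v j : sring)).
by [].
Qed.

Definition sD (s : sring) : sring := sder s.
Lemma sD_is_zmod_morphism : zmod_morphism sD. Proof. by []. Qed.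
HB.instance Definition _ := GRing.isZmodMorphism.Build sring sring sD sD_is_zmod_morphism.

Lemma sD_mul (s t : sring) : sD (s * t) = sD s * t + sc (s 0%N) * sD t.
Proof.
apply: funext => i; rewrite /sD /sder /GRing.add /= /sadd mul_sc.
by rewrite /GRing.mul /= /smul big_ord_recl /= subn0 addrC.
Qed.

Lemma sD_sc (c : K) : sD (sc c) = 0.
Proof. by apply: funext => -[|i]. Qed.

Lemma sD_scM (c : K) (s : sring) : sD (sc c * s) = sc c * sD s.
Proof. by rewrite sD_mul sD_sc mul0r add0r. Qed.

Lemma sD_X : sD (sX K) = 1.
Proof. by apply: funext => -[|[|i]]. Qed.

Lemma sD_eq0 (s : sring) : sD s = 0 -> s = sc (s 0%N).
Proof.
move=> Ds; apply: funext => -[|i] //.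
by have := congr1 (fun t : sring => t i) Ds; rewrite /sD /sder => ->; case: i.
Qed.

Lemma size_sinv_aux (s : stream K) m : size (sinv_aux s m) = m.+1.
Proof. by elim: m => [|m IH] //=; rewrite size_rcons IH. Qed.

Lemma nth_sinv_aux (s : stream K) m j :
  (j <= m)%N -> nth 0 (sinv_aux s m) j = sinv s j.
Proof.
elim: m j => [|m IH] j; first by rewrite leqn0 => /eqP ->.
rewrite leq_eqVlt => /orP [/eqP -> //|]; rewrite ltnS => jm.
by rewrite /= nth_rcons size_sinv_aux ltnS jm IH.
Qed.

Lemma sinvS (s : stream K) m :
  sinv s m.+1 = - (s 0%N)^-1 * \sum_(j < m.+1) s j.+1 * sinv s (m - j)%N.
Proof.
rewrite {1}/sinv /= nth_rcons size_sinv_aux ltnn eqxx; congr (_ * _).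
by apply: eq_bigr => j _; rewrite nth_sinv_aux // leq_subr.
Qed.

Lemma sinvK (s : sring) : s 0%N != 0 -> (sinv s : sring) * s = 1.
Proof.
move=> s0; rewrite mulrC; apply: funext => -[|m]; rewrite /GRing.mul /= /smul.
  by rewrite big_ord1 /sinv /= mulfV.
rewrite big_ord_recl /= subn0 sinvS mulrA mulrN mulfV // mulN1r.
rewrite /GRing.one /= /sone /sconst /=; apply/eqP; rewrite addrC subr_eq0.
by apply/eqP/eq_bigr => j _; rewrite /bump /= add1n subSS.
Qed.

Lemma sinv_unique (s t : sring) : s 0%N != 0 -> s * t = 1 -> t = sinv s.
Proof. by move=> s0 st; rewrite -[t]mul1r -(sinvK s0) -mulrA st mulr1. Qed.

(* The inverse of [G] is the unique solution of the linear initial value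
   problem tau' = - G(0)^-1 G' tau, tau(0) = G(0)^-1: differentiate G tau = 1
   with the product rule. *)
Lemma inverse_ode (G tau : sring) : G 0%N != 0 ->
  G * tau = 1 <->
  sD tau = sc (- (G 0%N)^-1) * (sD G * tau) /\ tau 0%N = (G 0%N)^-1.
Proof.
set c := G 0%N => c0; have Dprod := sD_mul G tau; rewrite -/c in Dprod.
split=> [Gtau | [Dtau tau0]].
  have tau0 : tau 0%N = c^-1.
    have := congr1 ev0 Gtau; rewrite rmorphM rmorph1 /ev0 -/c => ctau.
    by rewrite -[tau 0%N]mul1r -(mulVf c0) -mulrA ctau mulr1.
  split=> //.
  have sc_inv : sc c^-1 * sc c = 1 by rewrite -rmorphM mulVf // rmorph1.
  have cDtau : sc c * sD tau = - (sD G * tau).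
    by apply/eqP; rewrite -addr_eq0 addrC -Dprod Gtau -(rmorph1 sc) sD_sc.
  by rewrite -[sD tau]mul1r -sc_inv -mulrA cDtau mulrN -mulNr -rmorphN.
have D0 : sD (G * tau) = 0.
  by rewrite Dprod Dtau mulrA -rmorphM mulrN mulfV // rmorphN rmorph1 mulN1r subrr.
rewrite (sD_eq0 D0) -[(G * tau) 0%N]/(ev0 (G * tau)) rmorphM /= /ev0 tau0 -/c.
by rewrite mulfV // rmorph1.
Qed.

End StreamCalculus.

Section Causality.
Variable K : fieldType.
Local Notation sring := (sring K).
Local Notation sc := (@sc K).

(* The
   stream operations are causal: the first [k + 1] coefficients of a result
   only depend on the first [k + 1] coefficients of the arguments. *)
Definition agree k (s t : sring) := forall j, (j <= k)%N -> s j = t j.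

Lemma agreeD k (s s' t t' : sring) :
  agree k s s' -> agree k t t' -> agree k (s + t) (s' + t').
Proof. by move=> Hs Ht j jk; rewrite /GRing.add /= /sadd Hs ?Ht. Qed.

Lemma agreeM k (s s' t t' : sring) :
  agree k s s' -> agree k t t' -> agree k (s * t) (s' * t').
Proof.
move=> Hs Ht j jk; rewrite /GRing.mul /= /smul; apply: eq_bigr => -[l /= lj] _.
by rewrite Hs ?Ht //; apply: leq_trans jk; rewrite ?leq_subr // -ltnS.
Qed.

Lemma agreeX k (s s' : sring) e : agree k s s' -> agree k (s ^+ e) (s' ^+ e).
Proof. by move=> H; elim: e => [|e IH]; rewrite ?expr0 ?exprS //; apply: agreeM. Qed.

Lemma agree_mmap k m (p : {mpoly K[m]}) (u u' : 'I_m -> sring) :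
  (forall j, agree k (u j) (u' j)) -> agree k (mmap sc u p) (mmap sc u' p).
Proof.
move=> H; apply: (big_ind2 (agree k)) => [//|x x' y y'|mm _]; first exact: agreeD.
apply: agreeM => //; apply: (big_ind2 (agree k)) => [//|x x' y y'|j _].
  exact: agreeM.
exact: agreeX.
Qed.

(* Inversion is causal, since sinv s = (sinv s * sinv s') * s' and
   sinv s' = (sinv s * sinv s') * s. *)
Lemma agree_sinv k (s s' : sring) :
  s 0%N != 0 -> agree k s s' -> agree k (sinv s) (sinv s').
Proof.
move=> s0 H; have s'0 : s' 0%N != 0 by rewrite -H.
have := agreeM (fun j _ => erefl (((sinv s : sring) * sinv s') j))
                (fun j jk => esym (H j jk)).
by rewrite -!mulrA (sinvK s'0) mulrCA (sinvK s0) !mulr1.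
Qed.

End Causality.

Section MultinomialMorphisms.

Lemma eq_mmap k (R : nzRingType) (S : comNzRingType) (f1 f2 : R -> S)
    (h1 h2 : 'I_k -> S) (p : {mpoly R[k]}) :
  f1 =1 f2 -> h1 =1 h2 -> mmap f1 h1 p = mmap f2 h2 p.
Proof.
move=> ef eh; apply: eq_bigr => m _; rewrite ef; congr (_ * _).
exact: mmap1_eq.
Qed.

Lemma mmapXi k (R : nzRingType) (S : comNzRingType) (f : {rmorphism R -> S})
    (h : 'I_k -> S) i :
  mmap f h 'X_i = h i.
Proof. by rewrite mmapX mmap1U. Qed.

Lemma mmap_rmorph k (R S S' : nzRingType) (phi : {rmorphism S -> S'})
    (f : R -> S) (h : 'I_k -> S) (p : {mpoly R[k]}) :
  phi (mmap f h p) = mmap (phi \o f) (phi \o h) p.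
Proof.
rewrite rmorph_sum; apply: eq_bigr => m _; rewrite rmorphM rmorph_prod.
by congr (_ * _); apply: eq_bigr => j _; rewrite rmorphXn.
Qed.

Lemma mmap_comp (R : nzRingType) (S : comNzRingType) (k l : nat)
    (f : {rmorphism R -> S}) (h : 'I_l -> S) (lq : k.-tuple {mpoly R[l]})
    (p : {mpoly R[k]}) :
  mmap f h (p \mPo lq) = mmap f (fun i => mmap f h (tnth lq i)) p.
Proof.
rewrite /comp_mpoly (mmap_rmorph (mmap f h : {rmorphism {mpoly R[l]} -> S})).
by apply: eq_mmap => // c /=; rewrite mmapC.
Qed.

End MultinomialMorphisms.

Section SyntacticDerivativeEval.
Variables (K : fieldType) (n : nat).
Local Notation sring := (sring K).
Local Notation sc := (@sc K).
Variables (r0 : 'I_n -> K) (sigma : 'I_n -> sring).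
Hypothesis sigma0 : forall i, sigma i 0%N = r0 i.

Lemma atI_ord (T : Type) (F : 'I_n -> T) d (i : 'I_n) : atI i F d = F i.
Proof. by rewrite /atI; case: insubP => [j _ /val_inj -> //|]; rewrite ltn_ord. Qed.

Definition letter (z : option 'I_n) : sring := if z is Some i then sigma i else sX K.

Section WordValuation.
Variable v : 'I_(n+n+n).+1 -> sring.
Hypotheses (vx : v (vxB n) = sX K) (vy0 : forall i, v (vy0B i) = sc (r0 i))
  (vy : forall i, v (vyB i) = sigma i) (vyp : forall i, v (vypB i) = sD (sigma i)).

(* On a sorted word, the syntactic derivative evaluates to the stream
   derivative of the product of its letters: this is the product rule
   (z m)' = z' m + z(0) m', as the initial value of the letter y_i is
   r0i = y_0i and that of x is 0 = y_00. *)
Lemma mmap_dword w : mmap sc v (dword K w) = sD (\prod_(z <- w) letter z).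
Proof.
elim: w => [|z w IH] /=; first by rewrite big_nil mmap0 -(rmorph1 sc) sD_sc.
rewrite big_cons rmorphD /= !rmorphM /= IH sD_mul rmorph_prod /=.
congr (_ * _ + _ * _).
- by case: z => [i|] /=; rewrite ?mmapXi ?vyp // rmorph1 sD_X.
- by apply: eq_bigr => -[i|] _ /=; rewrite mmapXi.
- by case: z => [i|] /=; rewrite ?mmapXi ?vy0 ?sigma0 // mmap0 rmorph0.
Qed.

Lemma mmap_y0part (m : 'X_{1..(n+n).+1}) :
  mmap sc v (y0part K m) = \prod_(i < n) sc (r0 i) ^+ m (vy0A i).
Proof.
rewrite /y0part rmorph_prod; apply: eq_bigr => i _.
by rewrite rmorphXn /= mmapXi vy0.
Qed.

End WordValuation.

Lemma prod_word (m : 'X_{1..(n+n).+1}) :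
  \prod_(z <- word_of m) letter z =
  (sX K : sring) ^+ m (vxA n) * \prod_(i < n) sigma i ^+ m (vyA i).
Proof.
rewrite /word_of big_cat big_nseq iter_mulr_1 /=; congr (_ * _).
rewrite big_flatten big_map big_enum /=; apply: eq_bigr => i _.
by rewrite big_nseq iter_mulr_1.
Qed.

Lemma mmap1_ptA (m : 'X_{1..(n+n).+1}) :
  mmap1 (ptA r0 sigma : 'I_(n+n).+1 -> sring) m =
  (sX K : sring) ^+ m (vxA n) *
    (\prod_(i < n) sc (r0 i) ^+ m (vy0A i) * \prod_(i < n) sigma i ^+ m (vyA i)).
Proof.
rewrite /mmap1 big_ord_recl big_split_ord /=.
have -> : vxA n = ord0 by apply: val_inj; rewrite /= inordK.
congr (_ * (_ * _)); apply: eq_bigr => i _.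
- have -> : vy0A i = lift ord0 (lshift n i).
    by apply: val_inj; rewrite /= inordK // ltnS ltn_addr.
  by rewrite /ptA lift0 /= ltn_ord atI_ord.
- have -> : vyA i = lift ord0 (rshift n i).
    by apply: val_inj; rewrite /= inordK // ltnS ltn_add2l.
  by rewrite /ptA lift0 /= ltnNge leq_addr /= -addnS addKn /= atI_ord.
Qed.

Lemma synder_eval (g : {mpoly K[(n+n).+1]}) (v : 'I_(n+n+n).+1 -> sring) :
  v (vxB n) = sX K -> (forall i, v (vy0B i) = sc (r0 i)) ->
  (forall i, v (vyB i) = sigma i) -> (forall i, v (vypB i) = sD (sigma i)) ->
  mmap sc v (synder g) = sD (mmap sc (ptA r0 sigma : 'I_(n+n).+1 -> sring) g).
Proof.
move=> vx vy0 vy vyp; rewrite /synder raddf_sum /mmap raddf_sum /=.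
apply: eq_bigr => m _.
rewrite mmapZ rmorphM /= mmap_y0part // mmap_dword // prod_word mmap1_ptA.
have -> : \prod_(i < n) sc (r0 i) ^+ m (vy0A i) = sc (\prod_(i < n) r0 i ^+ m (vy0A i)).
  by rewrite rmorph_prod; apply: eq_bigr => i _; rewrite rmorphXn.
by rewrite [in RHS](mulrCA ((sX K : sring) ^+ _)) !sD_scM.
Qed.

End SyntacticDerivativeEval.

Section AuxiliaryPolynomial.
Variables (K : fieldType) (n : nat).
Local Notation sring := (sring K).
Local Notation sc := (@sc K).
Variables (r0 : 'I_n -> K) (f : 'I_n -> {mpoly K[(n+n).+1]}) (g : {mpoly K[(n+n).+1]}).

Lemma mmap_embAC (sigma : 'I_n -> sring) (tau : sring) p :
  mmap sc (ptC r0 sigma tau : 'I_(n+n).+2 -> sring) (embAC p) =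
  mmap sc (ptA r0 sigma : 'I_(n+n).+1 -> sring) p.
Proof.
rewrite /embAC mmap_comp; apply: eq_mmap => // j.
have jle : (j <= n + n)%N := ltn_ord j.
by rewrite tnth_mktuple mmapXi /ptC /ptA /= jle.
Qed.

(* Along a solution of sigma_i' = f_i tau, the polynomial h evaluates to
   the derivative of G = g(X, r0, sigma): substituting f_i w for y_i' in g'
   and evaluating is evaluating g' at sigma_i' = f_i tau. *)
Lemma hpoly_eval (sigma : 'I_n -> sring) (tau : sring) :
  (forall i, sigma i 0%N = r0 i) ->
  (forall i, sD (sigma i) = (seval (f i) (ptA r0 sigma) : sring) * tau) ->
  (seval (hpoly f g) (ptC r0 sigma tau) : sring) = sD (seval g (ptA r0 sigma)).
Proof.
move=> sigma0 Dsigma; rewrite !seval_mmap /hpoly mmap_comp.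
apply: synder_eval => // [|i|i|i]; rewrite tnth_mktuple.
- by rewrite /vxB inordK // mmapXi /ptC inordK.
- have ilt := ltn_ord i; rewrite /vy0B inordK; last by lia.
  have -> : (i.+1 < (n+n).+1)%N by lia.
  by rewrite mmapXi /ptC inordK /= ?ltn_ord ?atI_ord //; lia.
- have ilt := ltn_ord i; rewrite /vyB inordK; last by lia.
  have -> : ((n + i).+1 < (n+n).+1)%N by lia.
  rewrite mmapXi /ptC inordK /=; last by lia.
  have -> : ((n + i).+1 <= n)%N = false by lia.
  have -> : ((n + i).+1 <= n + n)%N by lia.
  by rewrite -addnS addKn atI_ord.
- have ilt := ltn_ord i; rewrite /vypB inordK; last by lia.
  have -> : ((n + n + i).+1 < (n+n).+1)%N = false by lia.
  have -> : ((n + n + i).+1 - (n+n).+1)%N = i by lia.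
  rewrite atI_ord rmorphM /= mmap_embAC mmapXi /ptC /vwC inordK //=.
  have -> : ((n + n).+1 <= n)%N = false by lia.
  have -> : ((n + n).+1 <= n + n)%N = false by lia.
  by rewrite Dsigma seval_mmap.
Qed.

Lemma seval_at0 (sigma : 'I_n -> sring) (p : {mpoly K[(n+n).+1]}) :
  (forall i, sigma i 0%N = r0 i) -> seval p (ptA r0 sigma) 0%N = p.@[pt0 r0].
Proof.
move=> sigma0; rewrite seval_mmap.
change (ev0 (mmap sc (ptA r0 sigma : 'I_(n+n).+1 -> sring) p) = p.@[pt0 r0]).
rewrite mmap_rmorph; apply: eq_mmap => // j /=.
rewrite /ev0 /ptA /pt0; case: ifP => // _; case: ifP => // _.
by rewrite /atI; case: insubP.
Qed.

End AuxiliaryPolynomial.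

Section Solutions.
Variables (K : fieldType) (n : nat).
Local Notation sring := (sring K).
Variables (r0 : 'I_n -> K) (f : 'I_n -> {mpoly K[(n+n).+1]}) (g : {mpoly K[(n+n).+1]}).
Hypothesis Hg : g.@[pt0 r0] != 0.

(* The rational system has at most one solution: by induction on k, the
   coefficients up to k + 1 of the sigma_i are determined by those up to k,
   because the right-hand side is causal. *)
Lemma rat_sol_unique (sigma sigma' : 'I_n -> stream K) :
  rat_sol f g r0 sigma -> rat_sol f g r0 sigma' -> forall i, sigma i =1 sigma' i.
Proof.
move=> Hs Hs'.
have agree_pt k : (forall i, agree k (sigma i) (sigma' i)) ->
    forall j, agree k (ptA r0 sigma j) (ptA r0 sigma' j).
  move=> H j l lk; rewrite /ptA; case: ifP => // _; case: ifP => // _.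
  by rewrite /atI; case: insubP => [i _ _|_] //=; apply: H.
suff H k i : agree k (sigma i) (sigma' i) by move=> i j; exact: (H j i j).
elim: k i => [|k IH] i [|j] // jk; rewrite ?(Hs i).2 ?(Hs' i).2 //.
rewrite -[sigma i j.+1]/(sder (sigma i) j) -[sigma' i j.+1]/(sder (sigma' i) j).
rewrite (Hs i).1 (Hs' i).1; apply: (agreeM (k := k)) => //.
- by rewrite !seval_mmap; apply/agree_mmap/agree_pt.
- apply: agree_sinv; first by rewrite seval_at0 // => l; exact: (Hs l).2.
  by rewrite !seval_mmap; apply/agree_mmap/agree_pt.
Qed.

(* Once the equations for the sigma_i hold, the polynomial system holds iff
   tau is the inverse of G = g(X, r0, sigma): by hpoly_eval the equation for
   tau is the differential characterization of the inverse. *)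
Lemma poly_sol_inverse (sigma : 'I_n -> stream K) (tau : stream K) :
  (forall i, sder (sigma i) =1 smul (seval (f i) (ptA r0 sigma)) tau /\
             sigma i 0%N = r0 i) ->
  poly_sol f g r0 sigma tau <-> (seval g (ptA r0 sigma) : sring) * tau = 1.
Proof.
move=> Hs; have sigma0 i : sigma i 0%N = r0 i := (Hs i).2.
have G0 := seval_at0 g sigma0.
have Dsigma i : sD (sigma i) = (seval (f i) (ptA r0 sigma) : sring) * tau.
  by apply: funext; exact: (Hs i).1.
have Dh := hpoly_eval g sigma0 Dsigma.
rewrite inverse_ode G0 //; split=> [[_ [Dtau tau0]] | [Dtau tau0]].
  by split=> //; apply: funext => j; rewrite /sD Dtau sscale_sc Dh.
by do !split=> //; move=> j; rewrite -[sder tau j]/(sD tau j) Dtau sscale_sc Dh.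
Qed.

Lemma poly_sol_rat (sigma : 'I_n -> stream K) (tau : stream K) :
  poly_sol f g r0 sigma tau ->
  tau = sinv (seval g (ptA r0 sigma)) /\ rat_sol f g r0 sigma.
Proof.
move=> PS; have Hs := PS.1.
have G0 : seval g (ptA r0 sigma) 0%N != 0 by rewrite seval_at0 // => i; exact: (Hs i).2.
have Etau := sinv_unique G0 ((poly_sol_inverse Hs).1 PS).
by split=> // i; split=> [j|]; rewrite ?(Hs i).1 -?Etau //; exact: (Hs i).2.
Qed.

End Solutions.

Theorem lemma3p3 (K : fieldType) (charK0 : [pchar K] =i pred0) (n : nat)
  (f : 'I_n -> {mpoly K[(n+n).+1]}) (g : {mpoly K[(n+n).+1]})
  (r0 : 'I_n -> K) (Hg : g.@[pt0 r0] != 0) :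
  (forall sigma : 'I_n -> stream K,
     rat_sol f g r0 sigma ->
     let tau := sinv (seval g (ptA r0 sigma)) in
     poly_sol f g r0 sigma tau /\
     (forall (sigma' : 'I_n -> stream K) (tau' : stream K),
        poly_sol f g r0 sigma' tau' ->
        (forall i : 'I_n, sigma' i =1 sigma i) /\ tau' =1 tau))
  /\
  (forall (sigma : 'I_n -> stream K) (tau : stream K),
     poly_sol f g r0 sigma tau -> rat_sol f g r0 sigma).
Proof.
split=> [sigma Hs tau | sigma tau /(poly_sol_rat Hg) []//].
have G0 : seval g (ptA r0 sigma) 0%N != 0 by rewrite seval_at0 // => i; exact: (Hs i).2.
have PS : poly_sol f g r0 sigma tau.
  by apply/(poly_sol_inverse Hg Hs); rewrite mulrC sinvK.
split=> // sigma' tau' /(poly_sol_rat Hg) [-> Hs'].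
have Esigma := rat_sol_unique Hg Hs' Hs.
have -> : sigma' = sigma by apply: funext => i; apply: funext; exact: Esigma.
by [].
Qed.
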